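(* Fix a deterministic adversary $A$, parameters $\varepsilon,\delta,t,k$, a database $S$ and an element $x'\in X$, and let $S'=S\cup\{x'\}$. For a database $T$ let $\mathcal B(T)\in\{\bot,\top\}^*$ be the answer vector of \texttt{ThresholdMonitor} on $T$ interacting with $A$. Let $\vec a=(a_1,a_2,\dots)$ be an outcome vector and $W=(w_1,w_2,\dots)$ a vector of values of the noises $w_i$ such that event $E_3$ (defined in the context, for the execution on $S$) occurs for $(\vec a,W)$. Let $i^*$ be the first time step at which $c_{i^*}(x')\geq k$ (counters computed along $\vec a$), let $I_{\rm top}$ be the set of time steps $i\leq i^*$ with $a_i=\top$, and let $W'$ be the vector with $w'_i=w_i-f_{\vec a,i}(x')$ for $i\in I_{\rm top}$ and $w'_i=w_i$ otherwise. Then $$\Pr[\mathcal B(S')=\vec a\mid W']\leq\Pr[\mathcal B(S)=\vec a\mid W]\leq\exp\left(\frac{75(k+1)\varepsilon}{\log\frac1\delta}+25\varepsilon\right)\Pr[\mathcal B(S')=\vec a\mid W],$$ where conditioning on $W$ (resp. $W'$) means fixing the noises $w_i$ to those values, so that probabilities are only over the noises $v_i$.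
   Context: $X$ is a data domain; databases are finite multisets of elements of $X$. For $f:X\to[0,1]$, $f(D)=\sum_{x\in D}f(x)$. $\mathrm{Lap}(b)$ has density $\frac{1}{2b}e^{-|x|/b}$. Algorithm \texttt{ThresholdMonitor}. Input: database $S$, parameters $\varepsilon,\delta,t,k$, adaptively chosen queries $f_i:X\to[0,1]$. Initialize $c(x)=0$ for all $x\in X$. Let $\Delta=\frac{1}{\varepsilon}\log\left(\frac{1}{\delta}\right)\log\left(\frac{1}{\varepsilon}\log\frac{1}{\delta}\right)$. In round $i$: sample independently $w_i\sim\mathrm{Lap}(10\Delta)$, $v_i\sim\mathrm{Lap}(\frac{1}{\varepsilon}\log\frac{1}{\delta})$; let $\overline{v}_i=\min\{v_i,\Delta\}$, $\hat f_i=f_i(S)+w_i+\overline{v}_i$ (current $S$). If $\hat f_i<t$ output $a_i=\bot$; else output $a_i=\top$, set $c(x)\leftarrow c(x)+f_i(x)$ for all $x\in X$, and delete from $S$ every $x$ with $c(x)\geq k$. Since $A$ is deterministic, the $i$th query is determined by the previous answers; $f_{\vec a,i}$ denotes the query $A$ chooses after seeing the first $i-1$ answers of $\vec a$. In the execution on $S$, $S_i$ is the database before the $i$th query and $c_i(\cdot)$ the counter after round $i$. Time step $i$ is an almost-top if $a_i=\bot$, $c_i(x')<k$ and $f_i(S_i)+w_i\geq t-2\Delta$; it is a special-almost-top if $a_i=\bot$, $c_i(x')<k$ and $t-f_i(x')-\Delta\leq f_i(S_i)+w_i<t-\Delta$. Event $E_1$: $\sum_{i\text{ almost-top}}f_i(x')\leq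 15(k+1)+5\log\frac1\delta$. Event $E_2$: the number of special-almost-tops is at most $30(k+1)+10\log\frac1\delta$. $E_3=E_1\wedge E_2$; it is determined by $\vec a$ and $W$. *)

From HB Require Import structures.
From mathcomp Require Import all_boot all_order all_algebra.
From mathcomp Require Import all_classical all_reals all_analysis.
Set Implicit Arguments. Unset Strict Implicit. Unset Printing Implicit Defensive.
Import Order.TTheory GRing.Theory Num.Theory.
Local Open Scope ring_scope.

(* Rounds are 0-indexed: round j here is time step i = j+1 of the paper.
   An adversary is a deterministic map from the history of previous answers
   (true = top, false = bot) to the next query f : X -> R.                   *)

Section Threshold.
Variable R : realType.
Variable X : Type.

Definition lap_pdf (b y : R) : R := (2 * b)^-1 * expR (- `|y| / b).

Definition scons (y : R) (v : nat -> R) : nat -> R :=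
  fun i => if i is i'.+1 then v i' else y.

(* Probability, over i.i.d. v_0, ..., v_{n-1} ~ Lap(b), of the event P (which
   only depends on the first n coordinates), as an iterated Lebesgue integral. *)
Fixpoint iprob (b : R) (n : nat) (P : (nat -> R) -> bool) : \bar R :=
  match n with
  | 0 => ((P (fun _ => 0))%:R)%:E
  | n'.+1 => (\int[@lebesgue_measure R]_(y in [set: R])
                ((lap_pdf b y)%:E * iprob b n' (fun v => P (scons y v))))%E
  end.

(* f(D) = sum_{x in D} f(x), databases are finite multisets (seq X) *)
Definition qeval (f : X -> R) (D : seq X) : R := \sum_(x <- D) f x.

Definition bv (eps delta : R) : R := eps^-1 * ln (delta^-1).
Definition Delta (eps delta : R) : R := bv eps delta * ln (bv eps delta).

Variable A : seq bool -> X -> R.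

Definition tm_step (Dl t k w v : R) (st : seq X * (X -> R) * seq bool)
  : seq X * (X -> R) * seq bool :=
  let: (D, c, h) := st in
  let f := A h in
  if qeval f D + w + Num.min v Dl < t then (D, c, rcons h false)
  else let c' := fun x => c x + f x in
       (seq.filter (fun x => c' x < k) D, c', rcons h true).

Fixpoint tm_run (eps delta t k : R) (S : seq X) (W V : nat -> R) (n : nat)
  : seq X * (X -> R) * seq bool :=
  match n with
  | 0 => (S, fun _ => 0, [::])
  | n'.+1 => tm_step (Delta eps delta) t k (W n') (V n')
                     (tm_run eps delta t k S W V n')
  end.

(* Pr[ B(T) = a | W ] : probability over the v_i only, the w_i being fixed to W;
   B(T) = a means the |a| answers of the interaction are exactly a. *)
Definition prB (eps delta t k : R) (T : seq X) (W : nat -> R) (a : seq bool)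
  : \bar R :=
  iprob (bv eps delta) (size a)
        (fun V => (tm_run eps delta t k T W V (size a)).2 == a).

(* Database and counters along the outcome vector a (execution on S). *)
Fixpoint traj (k : R) (S : seq X) (a : seq bool) (j : nat) : seq X * (X -> R) :=
  match j with
  | 0 => (S, fun _ => 0)
  | j'.+1 => let: (D, c) := traj k S a j' in
             if nth false a j'
             then let c' := fun x => c x + A (take j' a) x in
                  (seq.filter (fun x => c' x < k) D, c')
             else (D, c)
  end.

Definition query (a : seq bool) (j : nat) : X -> R := A (take j a).
Definition Dbefore k S a j : seq X := (traj k S a j).1.
Definition cafter k S a j : X -> R := (traj k S a j.+1).2.

Definition almost_top (eps delta t k : R) S (x' : X) a (W : nat -> R) j : bool :=
  [&& ~~ nth false a j, cafter k S a j x' < k &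
      t - 2 * Delta eps delta <= qeval (query a j) (Dbefore k S a j) + W j].

Definition special_almost_top (eps delta t k : R) S (x' : X) a (W : nat -> R) j
  : bool :=
  [&& ~~ nth false a j, cafter k S a j x' < k,
      t - query a j x' - Delta eps delta
        <= qeval (query a j) (Dbefore k S a j) + W j &
      qeval (query a j) (Dbefore k S a j) + W j < t - Delta eps delta].

Definition E1 eps delta t k S x' a W : Prop :=
  \sum_(j < size a | almost_top eps delta t k S x' a W j) query a j x'
    <= 15 * (k + 1) + 5 * ln (delta^-1).

Definition E2 eps delta t k S x' a W : Prop :=
  (count (special_almost_top eps delta t k S x' a W) (iota 0 (size a)))%:R
    <= 30 * (k + 1) + 10 * ln (delta^-1).

Definition E3 eps delta t k S x' a W : Prop :=
  E1 eps delta t k S x' a W /\ E2 eps delta t k S x' a W.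

(* j in I_top : a_j = top and j <= i*, i.e. no earlier round reached c(x') >= k *)
Definition in_Itop k S (x' : X) a j : bool :=
  nth false a j && all (fun j' => cafter k S a j' x' < k) (iota 0 j).

Definition Wshift k S (x' : X) a (W : nat -> R) : nat -> R :=
  fun j => if in_Itop k S x' a j then W j - query a j x' else W j.

End Threshold.

From HB Require Import structures.
From mathcomp Require Import all_boot all_order all_algebra.
From mathcomp Require Import all_classical all_reals all_analysis.
From mathcomp Require Import ring lra measurable_realfun.
Import Order.TTheory GRing.Theory Num.Theory.
Set Implicit Arguments. Unset Strict Implicit. Unset Printing Implicit Defensive.
Import numFieldTopology.Exports.
Local Open Scope classical_set_scope.
Local Open Scope ring_scope.

(* Once the noises w_j are fixed, the run answers a iff every round j answers
   a_j, and along a the test of round j reads u_j + min(v_j, Delta) < t, where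
   u_j (query value plus w_j) is computed along a.  The probability is therefore
   a product of one-dimensional Laplace probabilities, and both inequalities are
   proved factor by factor.  Along a, the run on x' :: S has the same counters as
   the run on S and keeps the extra x' exactly up to round i*, so u_j grows by
   f_j(x') for j <= i*.  With W' this shift cancels on the top rounds and only
   makes bot less likely on the bottom rounds, whence the first inequality.  For
   the second, a bottom round before i* is either certainly bot on x' :: S, or
   special-almost-top, where Pr[v < t - u_j - f_j(x')] >= e^(-2/b), or
   almost-top, where shifting the Laplace CDF by f_j(x') costs e^(f_j(x')/b);
   E1 and E2 bound the product of these factors. *)

Lemma lee_pmul_factor (R : realType) (x y : \bar R) (K C : R) :
  (0 <= y)%E -> K <= C -> (x <= K%:E * y)%E -> (x <= C%:E * y)%E.
Proof. by move=> y0 KC /le_trans; apply; rewrite lee_wpmul2r ?lee_fin. Qed.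

Lemma exponential_pdf_tail (R : realType) (rate s : R) : 0 < rate -> 0 <= s ->
  (\int[lebesgue_measure]_(x in `[s, +oo[) (exponential_pdf rate x)%:E
    = (expR (- rate * s))%:E)%E.
Proof.
move=> rate0 s0.
have cexp : continuous (fun z : R^o => expR (- rate * z)).
  move=> z; apply: continuous_comp; last exact: continuous_expR.
  by apply: continuousM => //; apply: (@continuousN _ R^o); exact: cst_continuous.
rewrite (@ge0_continuous_FTC2y _ _ (fun x => - expR (- rate * x)) _ 0) //.
- by rewrite -EFinB sub0r opprK.
- by move=> x _; apply: exponential_pdf_ge0; exact: ltW.
- apply: (@continuous_subspaceW R^o _ _ [set` `[0, +oo[%R]).
    by move=> x /=; rewrite !in_itv /= !andbT => /(le_trans s0).
  exact: within_continuous_exponential_pdf.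
- rewrite -oppr0; apply: cvgN.
  rewrite (_ : (fun x => expR (- rate * x)) =
               (fun z => expR (- z)) \o (fun z => rate * z)); last first.
    by apply: eq_fun => x; rewrite mulNr.
  apply: (@cvg_comp _ _ _ _ _ _ (pinfty_nbhs R)); last exact: cvgr_expR.
  exact: gt0_cvgMry.
- by apply: cvgN; apply/cvg_at_right_filter; exact: cexp.
- move=> x; rewrite in_itv /= andbT => sx.
  by apply: derive1_exponential_pdf; rewrite in_itv /= andbT (le_lt_trans s0).
Qed.

Section laplace.
Variables (R : realType) (b : R).
Hypothesis b0 : 0 < b.
Notation pdf := (lap_pdf b).
Notation mu := (@lebesgue_measure R).

Lemma lap_pdf_ge0 y : 0 <= pdf y.
Proof. by rewrite /lap_pdf mulr_ge0 ?expR_ge0 // invr_ge0 mulr_ge0 // ltW. Qed.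

Lemma continuous_lap_pdf : continuous pdf.
Proof.
move=> x; rewrite /lap_pdf.
apply: (@continuousM _ R^o (fun=> _) (fun y => expR (- `|y| / b))).
  exact: cst_continuous.
apply: continuous_comp; last exact: continuous_expR.
apply: (@continuousM _ R^o (fun y => - `|y|) (fun=> b^-1)); last exact: cst_continuous.
exact/(@continuousN _ R^o)/(@norm_continuous _ R^o).
Qed.

Lemma measurable_lap_pdf (D : set R) : measurable_fun D pdf.
Proof. by apply: measurable_funTS; exact: continuous_measurable_fun continuous_lap_pdf. Qed.

Lemma lap_pdf_exponential x : 0 <= x -> pdf x = 2^-1 * exponential_pdf b^-1 x.
Proof.
move=> x0; rewrite exponential_pdfE // /lap_pdf (ger0_norm x0) invfM -mulrA.
by congr (_ * _); rewrite mulrC [RHS]mulrC !mulNr (mulrC x).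
Qed.

Lemma integral_lap_pdf_itvcy s : 0 <= s ->
  (\int[mu]_(x in `[s, +oo[) (pdf x)%:E = (expR (- s / b) / 2)%:E)%E.
Proof.
move=> s0.
rewrite (@eq_integral _ _ _ mu _ (fun x => (2^-1)%:E * (exponential_pdf b^-1 x)%:E)%E);
  last first.
  move=> x; rewrite inE /= in_itv /= andbT => sx.
  by rewrite lap_pdf_exponential ?(le_trans s0) // EFinM.
rewrite ge0_integralZl_EFin //.
- rewrite exponential_pdf_tail ?invr_gt0 // -EFinM mulrC.
  by rewrite !mulNr [_ * s]mulrC.
- by move=> x _; rewrite lee_fin exponential_pdf_ge0 // invr_ge0 ltW.
- apply/measurable_EFinP/measurable_funTS.
  by apply: measurable_exponential_pdf; rewrite invr_ge0 ltW.
Qed.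

Lemma integral_lap_pdf_itvNyo_le0 s : s <= 0 ->
  (\int[mu]_(x in `]-oo, s[) (pdf x)%:E = (expR (s / b) / 2)%:E)%E.
Proof.
move=> s0.
rewrite integral_itv_bndo_bndc; last by apply/measurable_EFinP; exact: measurable_lap_pdf.
rewrite -[s]opprK ge0_integration_by_substitutionNy; last 2 first.
- exact/continuous_subspaceT/continuous_lap_pdf.
- by move=> x _; exact: lap_pdf_ge0.
rewrite (@eq_integral _ _ _ mu _ (fun x => (pdf x)%:E)); last first.
  by move=> x _; rewrite /= /lap_pdf normrN.
by rewrite integral_lap_pdf_itvcy ?oppr_ge0 // opprK.
Qed.

Lemma integral_lap_pdf_split s :
  (\int[mu]_(x in [set: R]) (pdf x)%:E =
   \int[mu]_(x in `]-oo, s[) (pdf x)%:E + \int[mu]_(x in `[s, +oo[) (pdf x)%:E)%E.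
Proof.
rewrite -(setUv `]-oo, s[%classic) ge0_integral_setU //=; last 4 first.
- exact: measurableC.
- by apply/measurable_EFinP; exact: measurable_lap_pdf.
- by move=> x _; rewrite lee_fin lap_pdf_ge0.
- exact/disj_setPCl.
by rewrite setCitvl.
Qed.

Lemma integral_lap_pdf : (\int[mu]_(x in [set: R]) (pdf x)%:E = 1)%E.
Proof.
rewrite (integral_lap_pdf_split 0) integral_lap_pdf_itvNyo_le0 //.
rewrite integral_lap_pdf_itvcy // -EFinD oppr0 !mul0r expR0; congr EFin; lra.
Qed.

Lemma integral_lap_pdf_itvNyo_ge0 s : 0 <= s ->
  (\int[mu]_(x in `]-oo, s[) (pdf x)%:E = (1 - expR (- s / b) / 2)%:E)%E.
Proof.
move=> s0; have := integral_lap_pdf_split s.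
rewrite integral_lap_pdf integral_lap_pdf_itvcy //.
have : (0 <= \int[mu]_(x in `]-oo, s[) (pdf x)%:E)%E.
  by apply: integral_ge0 => x _; rewrite lee_fin lap_pdf_ge0.
case: (\int[mu]_(x in `]-oo, s[) (pdf x)%:E)%E => // r _.
by rewrite -EFinD => -[H]; congr EFin; lra.
Qed.

Definition lap_prob (E : R -> bool) : \bar R :=
  (\int[mu]_(y in [set: R]) ((pdf y)%:E * (E y)%:R%:E))%E.

Lemma measurable_lap_prob_integrand (E : R -> bool) : measurable_fun setT E ->
  measurable_fun setT (fun y => ((pdf y)%:E * (E y)%:R%:E)%E).
Proof.
move=> mE; apply/measurable_EFinP.
rewrite (_ : (fun x => _) = (fun y => pdf y * (if E y then 1 else 0))); last first.
  by apply/funext => y /=; case: (E y).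
apply: measurable_funM; first exact: measurable_lap_pdf.
exact: measurable_fun_ifT.
Qed.

Lemma lap_prob_ge0 E : (0 <= lap_prob E)%E.
Proof.
by apply: integral_ge0 => y _; rewrite mule_ge0 // lee_fin ?lap_pdf_ge0 ?ler0n.
Qed.

Lemma le_lap_prob (E1 E2 : R -> bool) :
  measurable_fun setT E1 -> measurable_fun setT E2 ->
  (forall y, E1 y -> E2 y) -> (lap_prob E1 <= lap_prob E2)%E.
Proof.
move=> m1 m2 E12; apply: ge0_le_integral => //.
- by move=> y _; rewrite mule_ge0 // lee_fin ?lap_pdf_ge0 ?ler0n.
- exact: measurable_lap_prob_integrand.
- exact: measurable_lap_prob_integrand.
move=> y _; rewrite lee_wpmul2l ?lee_fin ?lap_pdf_ge0 //.
by case E: (E1 y); [rewrite (E12 _ E) | rewrite ler0n].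
Qed.

Lemma lap_prob_le1 E : measurable_fun setT E -> (lap_prob E <= 1)%E.
Proof.
move=> mE; rewrite -integral_lap_pdf; apply: ge0_le_integral => //.
- by move=> y _; rewrite mule_ge0 // lee_fin ?lap_pdf_ge0 ?ler0n.
- exact: measurable_lap_prob_integrand.
- by apply/measurable_EFinP; exact: measurable_lap_pdf.
move=> y _; rewrite -[leRHS]mule1 lee_wpmul2l ?lee_fin ?lap_pdf_ge0 //.
by case: (E y); rewrite ?ler01.
Qed.

Lemma lap_prob_lt s :
  lap_prob (fun y => y < s) = (\int[mu]_(x in `]-oo, s[) (pdf x)%:E)%E.
Proof.
rewrite [RHS]integral_mkcond /lap_prob; apply: eq_integral => y _.
rewrite patchE; case: ifPn => [/set_mem /=|ys].
  by rewrite in_itv /= => ->; rewrite mule1.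
rewrite (_ : (y < s) = false) ?mule0 //.
by apply/negbTE; apply: contra ys => ys; apply: mem_set; rewrite /= in_itv /= ys.
Qed.

End laplace.

Section laplace_cdf.
Variables (R : realType) (b : R).
Hypothesis b0 : 0 < b.
Notation prob := (@lap_prob R b).

Lemma lap_cdf_le0 s : s <= 0 -> prob (fun y => y < s) = (expR (s / b) / 2)%:E.
Proof. by move=> s0; rewrite lap_prob_lt integral_lap_pdf_itvNyo_le0. Qed.

Lemma lap_cdf_ge0 s : 0 <= s -> prob (fun y => y < s) = (1 - expR (- s / b) / 2)%:E.
Proof. by move=> s0; rewrite lap_prob_lt integral_lap_pdf_itvNyo_ge0. Qed.

Lemma lap_cdf_shift s d : 0 <= d ->
  (prob (fun y => (y < s)%R) <= (expR (d / b))%:E * prob (fun y => (y < s - d)%R))%E.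
Proof.
move=> d0.
have [s0|s0] := leP s 0.
  rewrite !lap_cdf_le0 //; last lra.
  by rewrite -EFinM lee_fin mulrA -expRD mulrBl addrC subrK.
have [sd0|sd0] := leP (s - d) 0.
  rewrite lap_cdf_ge0 ?(ltW s0) // lap_cdf_le0 // -EFinM lee_fin mulrA -expRD.
  rewrite -mulrDl [d + _]addrC subrK mulNr expRN.
  have p0 : 0 < expR (s / b) := expR_gt0 _.
  set p := expR (s / b) in p0 *.
  have pK : p * p^-1 = 1 by rewrite divff // gt_eqF.
  have : 0 <= (p - 1) ^+ 2 * p^-1 by rewrite mulr_ge0 ?sqr_ge0 ?invr_ge0 ?ltW.
  rewrite expr2; nra.
rewrite lap_cdf_ge0 ?(ltW s0) // lap_cdf_ge0; last lra.
rewrite -EFinM lee_fin.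
have -> : expR (- (s - d) / b) = expR (- s / b) * expR (d / b).
  by rewrite -expRD; congr expR; rewrite mulNr mulrBl opprB mulNr addrC.
have p1 : 1 <= expR (d / b) by rewrite -expR0 ler_expR divr_ge0 // ltW.
have qp1 : expR (- s / b) * expR (d / b) < 1.
  by rewrite -expRD -expR0 ltr_expR -mulrDl pmulr_llt0 ?invr_gt0 //; lra.
have q0 : 0 <= expR (- s / b) := expR_ge0 _.
set p := expR (d / b) in p1 qp1 *; set q := expR (- s / b) in q0 qp1 *.
(* p (1 - q p / 2) - (1 - q / 2) = (p - 1) (2 - q p - q) / 2 *)
have : 0 <= (p - 1) * (2 - q * p - q) by rewrite mulr_ge0 //; nra.
nra.
Qed.

Lemma lap_cdf_near_one s : 1 <= b * ln b -> b * ln b - 1 <= s ->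
  (1 <= (expR (2 / b))%:E * prob (fun y => (y < s)%R))%E.
Proof.
(* With p = e^(1/b) and u = p / b <= 1 (as 1/b <= ln b): e^(-s/b) <= u and
   p^2 >= 1 + u, so p^2 (1 - e^(-s/b) / 2) >= (1 + u) (1 - u / 2) >= 1. *)
move=> bl1 hs.
rewrite lap_cdf_ge0; last lra.
rewrite -EFinM lee_fin.
have eb : expR (ln b) = b by rewrite lnK // posrE.
have y0 : 0 < b^-1 by rewrite invr_gt0.
have -> : expR (2 / b) = expR b^-1 ^+ 2.
  by rewrite expr2 -expRD; congr expR; rewrite mulrC mulr_natr mulr2n.
have p1y : 1 + b^-1 <= expR b^-1 := expR_ge1Dx _.
have u1 : b^-1 * expR b^-1 <= 1.
  rewrite -(ler_pM2l b0) mulrA divff ?gt_eqF // mul1r mulr1 -[leRHS]eb ler_expR.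
  by rewrite -(ler_pM2l b0) divff ?gt_eqF.
have eu : expR (- s / b) <= b^-1 * expR b^-1.
  have -> : b^-1 * expR b^-1 = expR (- ln b + b^-1) by rewrite expRD expRN eb.
  rewrite ler_expR (_ : - ln b + b^-1 = - (b * ln b - 1) / b); last first.
    by field; rewrite gt_eqF.
  by rewrite !mulNr lerN2 ler_wpM2r // ltW.
set p := expR b^-1 in p1y u1 eu *; set u := b^-1 * p in u1 eu.
have u0 : 0 <= u by rewrite mulr_ge0 ?expR_ge0 ?ltW.
have pu : 1 + u <= p ^+ 2 by rewrite expr2 /u; nra.
have : (1 + u) * (1 - u / 2) <= p ^+ 2 * (1 - expR (- s / b) / 2).
  by apply: ler_pM => //; lra.
nra.
Qed.

End laplace_cdf.

Section iprob.
Variables (R : realType) (b : R).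
Hypothesis b0 : 0 < b.
Notation iprob := (@iprob R b).

Lemma iprob_ge0 n P : (0 <= iprob n P)%E.
Proof.
elim: n P => [|n IH] P /=; first by rewrite lee_fin ler0n.
by apply: integral_ge0 => y _; rewrite mule_ge0 // lee_fin lap_pdf_ge0.
Qed.

Lemma iprob_pred0 n : iprob n (fun _ => false) = 0%E.
Proof. by elim: n => [|n IH] //=; apply: integral0_eq => y _; rewrite IH mule0. Qed.

Lemma iprob_andl n (c : bool) Q :
  iprob n (fun v => c && Q v) = (c%:R%:E * iprob n Q)%E.
Proof. by case: c; rewrite ?mul1e ?mul0e // iprob_pred0. Qed.

Lemma iprob_all_cons n (E : nat -> R -> bool) : measurable_fun setT (E 0%N) ->
  iprob n.+1 (fun V => all (fun j => E j (V j)) (iota 0 n.+1)) =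
  (lap_prob b (E 0%N) * iprob n (fun V => all (fun j => E j.+1 (V j)) (iota 0 n)))%E.
Proof.
move=> mE /=; rewrite /lap_prob -ge0_integralZr //; last 3 first.
- exact: measurable_lap_prob_integrand.
- by move=> y _; rewrite mule_ge0 // lee_fin ?lap_pdf_ge0 ?ler0n.
- exact: iprob_ge0.
apply: eq_integral => y _; rewrite -muleA -iprob_andl.
congr (_ * iprob _ _)%E; apply/funext => v /=; congr (_ && _).
by rewrite -[1%N]addn0 iotaDl all_map.
Qed.

Lemma iprob_all_le_prod n (E1 E2 : nat -> R -> bool) (C : nat -> R) :
  (forall j, measurable_fun setT (E1 j)) -> (forall j, measurable_fun setT (E2 j)) ->
  (forall j, 0 <= C j) ->
  (forall j, (j < n)%N -> (lap_prob b (E1 j) <= (C j)%:E * lap_prob b (E2 j))%E) ->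
  (iprob n (fun V => all (fun j => E1 j (V j)) (iota 0 n)) <=
   (\prod_(0 <= j < n) C j)%:E * iprob n (fun V => all (fun j => E2 j (V j)) (iota 0 n)))%E.
Proof.
elim: n E1 E2 C => [|n IH] E1 E2 C m1 m2 C0 E12; first by rewrite big_geq // mul1e.
rewrite !iprob_all_cons // big_nat_recl // EFinM -muleA (muleCA _ (lap_prob _ _)) muleA.
apply: lee_pmul; [exact: lap_prob_ge0 | exact: iprob_ge0 | exact: E12 |].
by apply: (IH (fun j => E1 j.+1) (fun j => E2 j.+1) (fun j => C j.+1)) => // j jn; apply: E12.
Qed.

End iprob.

Section threshold_round.
Variables (R : realType) (Dl t : R).

Definition round_event (u : R) (ans : bool) (y : R) : bool :=
  (u + Num.min y Dl < t) == ~~ ans.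

Lemma measurable_round_event u ans : measurable_fun setT (round_event u ans).
Proof.
have mbot : measurable_fun setT (fun y : R => u + Num.min y Dl < t).
  by apply: measurable_fun_ltr => //; apply: measurable_funD => //; exact: measurable_minr.
rewrite (_ : round_event u ans =
             fun y => if ans then ~~ (u + Num.min y Dl < t) else u + Num.min y Dl < t).
  by case: ans => //; exact: measurable_neg.
by apply/funext => y; rewrite /round_event; case: ans; case: (_ < _).
Qed.

Lemma round_event_top_le u u' y :
  u <= u' -> round_event u true y -> round_event u' true y.
Proof. by rewrite /round_event /= !eqbF_neg -!leNgt => ? ?; lra. Qed.

Lemma round_event_bot_le u u' y :
  u' <= u -> round_event u false y -> round_event u' false y.
Proof. by rewrite /round_event /= !eqb_id => ? ?; lra. Qed.

Variable b : R.
Hypotheses (b0 : 0 < b) (DlE : Dl = b * ln b) (Dl1 : 1 <= Dl).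

Let mlt s : measurable_fun setT (fun y : R => y < s).
Proof. exact: measurable_fun_ltr. Qed.

Let minl y : Num.min y Dl <= y. Proof. by rewrite ge_min lexx. Qed.
Let minr y : Num.min y Dl <= Dl. Proof. by rewrite ge_min lexx orbT. Qed.

Lemma lap_prob_bot_special (u d : R) : d <= 1 -> t - d - Dl <= u < t - Dl ->
  (lap_prob b (round_event u false) <=
   (expR (2 / b))%:E * lap_prob b (round_event (u + d) false))%E.
Proof.
move=> d1 /andP[hl hr].
apply: le_trans (lap_prob_le1 b0 (measurable_round_event _ _)) _.
have bl1 : 1 <= b * ln b by rewrite -DlE.
have hs : b * ln b - 1 <= t - u - d by rewrite -DlE; lra.
apply: le_trans (lap_cdf_near_one b0 bl1 hs) _.
apply: lee_wpmul2l; first by rewrite lee_fin expR_ge0.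
apply: (le_lap_prob b0 (mlt _) (measurable_round_event _ _)) => y yt.
by rewrite /round_event eqb_id; have := minl y; lra.
Qed.

Lemma lap_prob_bot_almost_top (u d : R) : 0 <= d -> t - Dl <= u ->
  (lap_prob b (round_event u false) <=
   (expR (d / b))%:E * lap_prob b (round_event (u + d) false))%E.
Proof.
move=> d0 hu.
apply: le_trans (@le_lap_prob _ _ b0 _ (fun y => y < t - u) _ _ _) _.
- exact: measurable_round_event.
- exact: mlt.
- move=> y; rewrite /round_event eqb_id => ht; rewrite ltNge; apply/negP => hy.
  have : t - u <= Num.min y Dl by rewrite le_min hy /=; lra.
  lra.
apply: le_trans (lap_cdf_shift b0 (t - u) d0) _.
apply: lee_wpmul2l; first by rewrite lee_fin expR_ge0.
apply: (le_lap_prob b0 (mlt _) (measurable_round_event _ _)) => y yt.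
by rewrite /round_event eqb_id; have := minl y; lra.
Qed.

(* The two conditions are those of an almost-top and of a special-almost-top
   round with query value u and f(x') = d. *)
Lemma lap_prob_bot_le (u d : R) : 0 <= d <= 1 ->
  (lap_prob b (round_event u false) <=
   ((if t - 2 * Dl <= u then expR (d / b) else 1) *
    (if (t - d - Dl <= u) && (u < t - Dl) then expR (2 / b) else 1))%R%:E *
   lap_prob b (round_event (u + d) false))%E.
Proof.
move=> /andP[d0 d1].
have ed : 1 <= expR (d / b) by rewrite -expR0 ler_expR divr_ge0 // ltW.
have e2 : 1 <= expR (2 / b) by rewrite -expR0 ler_expR divr_ge0 // ltW.
have ge1 (c1 c2 : bool) :
    1 <= (if c1 then expR (d / b) else 1) * (if c2 then expR (2 / b) else 1).
  by case: c1; case: c2; rewrite ?mul1r ?mulr1 // mulr_ege1.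
have [h1|h1] := ltP (u + d + Dl) t.
  apply: lee_pmul_factor (lap_prob_ge0 b0 _) (ge1 _ _) _; rewrite mul1e.
  apply: (le_lap_prob b0 (measurable_round_event _ _) (measurable_round_event _ _)) => y _.
  by rewrite /round_event eqb_id; have := minr y; lra.
have [h2|h2] := ltP u (t - Dl).
  have -> : t - d - Dl <= u by lra.
  apply: (lee_pmul_factor (K := expR (2 / b)) (lap_prob_ge0 b0 _)).
    by case: ifP; rewrite ?mul1r // ler_peMl ?expR_ge0.
  by apply: lap_prob_bot_special => //; apply/andP; split; lra.
have Dl0 : 0 <= Dl by apply: le_trans Dl1.
have -> : t - 2 * Dl <= u by lra.
apply: (lee_pmul_factor (K := expR (d / b)) (lap_prob_ge0 b0 _)).
  by case: ifP; rewrite ?mulr1 // ler_peMr ?expR_ge0.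
exact: lap_prob_bot_almost_top.
Qed.

End threshold_round.

Section run.
Variables (R : realType) (X : Type) (A : seq bool -> X -> R).
Variables (eps delta t k : R) (a : seq bool).

Definition query_value (T : seq X) (W : nat -> R) j :=
  qeval (query A a j) (traj A k T a j).1 + W j.

Definition follow_event T W j :=
  round_event (Delta eps delta) t (query_value T W j) (nth false a j).

Definition follows T W (V : nat -> R) n := all (fun j => follow_event T W j (V j)) (iota 0 n).

Lemma tm_run_follows T W V n : (n <= size a)%N ->
  if follows T W V n
  then tm_run A eps delta t k T W V n = ((traj A k T a n).1, (traj A k T a n).2, take n a)
  else (tm_run A eps delta t k T W V n).2 != take n a.
Proof.
elim: n => [|n IH] na; first by rewrite /follows /= take0.
have {IH} := IH (ltnW na).
rewrite /follows -addn1 iotaD all_cat /= add0n andbT addn1 (take_nth false na).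
case: (all _ (iota 0 n)) => /= [->|].
  rewrite /tm_step /= /follow_event /query_value /query /round_event.
  case: (traj A k T a n) => [D c] /=.
  by case: (nth false a n); case: (_ < t) => //=; rewrite eqseq_rcons eqxx.
case: (tm_run A eps delta t k T W V n) => [[D c] h] /= Hne.
by rewrite /tm_step; case: (_ < t) => /=; rewrite eqseq_rcons (negbTE Hne).
Qed.

Lemma prB_follows T W :
  prB A eps delta t k T W a = iprob (bv eps delta) (size a) (follows T W ^~ (size a)).
Proof.
rewrite /prB; congr iprob; apply/funext => V.
have := @tm_run_follows T W V (size a) (leqnn _); rewrite take_size.
by case: (follows T W V (size a)) => [->|/negbTE //]; rewrite /= eqxx.
Qed.

End run.

Section trajectory.
Variables (R : realType) (X : Type) (A : seq bool -> X -> R).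
Variables (k : R) (S : seq X) (x' : X) (a : seq bool).

(* alive j <-> j <= i*, i.e. x' has not been deleted before round j. *)
Definition alive j := all (fun j' => cafter A k S a j' x' < k) (iota 0 j).

Lemma aliveS j : alive j.+1 = alive j && ((traj A k S a j.+1).2 x' < k).
Proof. by rewrite /alive -[in LHS]addn1 iotaD all_cat /= andbT add0n. Qed.

Lemma traj_counters T T' j : (traj A k T a j).2 = (traj A k T' a j).2.
Proof.
elim: j => [|j IH] //=.
case: (traj A k T a j) IH => [D c]; case: (traj A k T' a j) => [D' c'] /= ->.
by case: (nth false a j).
Qed.

Lemma alive_counter_lt j : 0 < k -> alive j -> (traj A k S a j).2 x' < k.
Proof. by case: j => [//|j] _; rewrite aliveS => /andP[]. Qed.

Lemma traj_cons j : 0 < k -> (traj A k (x' :: S) a j).1 =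
  if alive j then x' :: (traj A k S a j).1 else (traj A k S a j).1.
Proof.
move=> k0; elim: j => [//|j IH]; rewrite aliveS /=.
have ck := @alive_counter_lt j k0; have := traj_counters (x' :: S) S j.
case: (traj A k (x' :: S) a j) IH => [D' c']; case: (traj A k S a j) ck => [D c] /= ck -> ->.
case: (nth false a j) => /=; first by case: (alive j) => //=; case: (_ < k).
by case: (alive j) ck => //= ->.
Qed.

Lemma query_value_cons W j : 0 < k -> query_value A k a (x' :: S) W j =
  query_value A k a S W j + (if alive j then query A a j x' else 0).
Proof.
move=> k0; rewrite /query_value traj_cons //.
by case: (alive j); rewrite ?addr0 // /qeval big_cons; ring.
Qed.

End trajectory.

Section rounds.
Variables (R : realType) (X : Type) (A : seq bool -> X -> R).
Variables (eps delta t k : R) (S : seq X) (x' : X) (a : seq bool) (W : nat -> R).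
Hypothesis HA : forall h x, 0 <= A h x <= 1.
Hypothesis Hk : 0 < k.
Hypothesis Heps : 0 < eps.
Hypothesis Hdelta : 0 < delta < 1.
Hypothesis HDelta : 1 <= Delta eps delta.

Let b := bv eps delta.

Lemma ln_inv_delta_gt0 : 0 < ln delta^-1.
Proof. by case/andP: Hdelta => d0 d1; apply: ln_gt0; rewrite invf_gt1. Qed.

Lemma bv_gt0 : 0 < b.
Proof. by rewrite /b /bv mulr_gt0 ?invr_gt0 ?ln_inv_delta_gt0. Qed.

Let query_ge0 j : 0 <= query A a j x'.
Proof. by case/andP: (HA (take j a) x'). Qed.

Lemma follow_event_Wshift j y :
  follow_event A eps delta t k a (x' :: S) (Wshift A k S x' a W) j y ->
  follow_event A eps delta t k a S W j y.
Proof.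
rewrite /follow_event query_value_cons // /query_value /Wshift /in_Itop.
rewrite -/(alive A k S x' a j); have := query_ge0 j.
case: (nth false a j); case: (alive A k S x' a j) => /= d0;
  first [apply: round_event_top_le; lra | apply: round_event_bot_le; lra].
Qed.

Definition round_factor j :=
  (if almost_top A eps delta t k S x' a W j then expR (query A a j x' / b) else 1) *
  (if special_almost_top A eps delta t k S x' a W j then expR (2 / b) else 1).

Lemma round_factor_ge1 j : 1 <= round_factor j.
Proof.
have b0 := bv_gt0.
have ed : 1 <= expR (query A a j x' / b) by rewrite -expR0 ler_expR divr_ge0 ?query_ge0 ?ltW.
have e2 : 1 <= expR (2 / b) by rewrite -expR0 ler_expR divr_ge0 ?ltW.
by rewrite /round_factor; case: ifP => _; case: ifP => _; rewrite ?mul1r ?mulr1 // mulr_ege1.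
Qed.

Lemma lap_prob_follow_event_le j :
  (lap_prob b (follow_event A eps delta t k a S W j) <=
   (round_factor j)%:E * lap_prob b (follow_event A eps delta t k a (x' :: S) W j))%E.
Proof.
have b0 := bv_gt0.
rewrite /follow_event query_value_cons //.
have /andP[d0 d1] := HA (take j a) x'.
have weaken (u u' : R) ans : (forall y, round_event (Delta eps delta) t u ans y ->
    round_event (Delta eps delta) t u' ans y) ->
  (lap_prob b (round_event (Delta eps delta) t u ans) <=
   (round_factor j)%:E * lap_prob b (round_event (Delta eps delta) t u' ans))%E.
  move=> sub; apply: lee_pmul_factor (lap_prob_ge0 b0 _) (round_factor_ge1 j) _.
  rewrite mul1e; apply: (le_lap_prob b0 _ _ sub); exact: measurable_round_event.
case Hans: (nth false a j).
  by apply: weaken => y; apply: round_event_top_le; case: ifP; rewrite ?addr0 // lerDl.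
case Halive: (alive A k S x' a j); last by apply: weaken => y; rewrite addr0.
have cak : cafter A k S a j x' < k.
  have := alive_counter_lt Hk Halive; rewrite /cafter /=.
  by case: (traj A k S a j) => D c; rewrite Hans.
rewrite /round_factor /almost_top /special_almost_top Hans cak /=.
by apply: lap_prob_bot_le => //; apply/andP.
Qed.

Lemma prod_round_factor_le : E3 A eps delta t k S x' a W ->
  \prod_(0 <= j < size a) round_factor j <=
  expR (75 * (k + 1) * eps / ln (delta^-1) + 25 * eps).
Proof.
case; rewrite /E1 /E2 => hE1 hE2.
have L0 := ln_inv_delta_gt0; have b0 := bv_gt0.
rewrite /round_factor big_split /= -!big_mkcond -!expR_sum -expRD ler_expR.
rewrite -mulr_suml big_mkord big_const_seq iter_addr_0 /index_iota subn0.
set S1 := \sum_(j < size a | _) _ in hE1 *; set cnt := count _ _ in hE2 *.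
rewrite -[_ *+ cnt]mulr_natl.
have epsE : eps = ln delta^-1 * b^-1.
  by rewrite /b /bv invfM invrK mulrCA divff ?mulr1 // gt_eqF.
rewrite epsE (_ : 75 * (k + 1) * (ln delta^-1 * b^-1) / ln delta^-1 = 75 * (k + 1) * b^-1);
  last by field; rewrite !gt_eqF.
have bi : 0 <= b^-1 by rewrite invr_ge0 ltW.
have := ler_wpM2r bi hE1; have := ler_wpM2r bi hE2.
nra.
Qed.

End rounds.

Theorem lemma3p7 (R : realType) (X : Type) (A : seq bool -> X -> R)
  (eps delta t k : R) (S : seq X) (x' : X) (a : seq bool) (W : nat -> R)
  (HA : forall h x, 0 <= A h x <= 1)
  (Heps : 0 < eps) (Hdelta : 0 < delta < 1) (HDelta : 1 <= Delta eps delta)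
  (Hk : 0 < k)
  (HE3 : E3 A eps delta t k S x' a W) :
  (prB A eps delta t k (x' :: S) (Wshift A k S x' a W) a
     <= prB A eps delta t k S W a
   /\ prB A eps delta t k S W a
     <= (expR (75 * (k + 1) * eps / ln (delta^-1) + 25 * eps))%:E
        * prB A eps delta t k (x' :: S) W a)%E.
Proof.
have b0 := bv_gt0 Heps Hdelta.
have mE T W' j : measurable_fun setT (follow_event A eps delta t k a T W' j).
  exact: measurable_round_event.
rewrite !prB_follows; split.
  apply: le_trans (iprob_all_le_prod b0 (C := fun=> 1)
    (mE (x' :: S) (Wshift A k S x' a W)) (mE S W) _ _) _ => //.
    move=> j _; rewrite mul1e; apply: (le_lap_prob b0 (mE _ _ _) (mE _ _ _)) => y.
    exact: follow_event_Wshift.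
  by rewrite big1 // mul1e.
apply: le_trans (iprob_all_le_prod b0 (mE S W) (mE (x' :: S) W) _ _) _.
- by move=> j; apply: le_trans (round_factor_ge1 t k S x' a W HA Heps Hdelta j).
- by move=> j _; exact: lap_prob_follow_event_le.
apply: lee_wpmul2r; first by apply: iprob_ge0.
by rewrite lee_fin; exact: prod_round_factor_le.
Qed.
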